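(* Let $r:\mathcal C_1\to\mathcal C_2$ be an $F$-linear exact functor between $F$-linear triangulated categories equipped with weight structures. Assume that (1) $r$ is weight exact and (2) $r_{w=0}:\mathcal C_{1,w=0}\to\mathcal C_{2,w=0}$ is full. Then $r$ maps minimal weight filtrations to minimal weight filtrations: if $M_{\le n-1}\to M\to M_{\ge n}\xrightarrow{\delta}M_{\le n-1}[1]$ is a minimal weight filtration concentrated at $n$ of $M\in\mathcal C_1$, then $r(M_{\le n-1})\to r(M)\to r(M_{\ge n})\xrightarrow{r(\delta)} r(M_{\le n-1})[1]$ is a minimal weight filtration concentrated at $n$ of $r(M)$.
   Context: $F$ denotes a finite direct product of fields of characteristic zero. A weight structure $w$ on a triangulated category $\mathcal C$ is a pair of full subcategories $(\mathcal C_{w\le0},\mathcal C_{w\ge0})$, closed under direct summands, with $\mathcal C_{w\le0}\subset\mathcal C_{w\le0}[1]$, $\mathcal C_{w\ge0}[1]\subset\mathcal C_{w\ge0}$, $\mathcal C_{w\le n}=\mathcal C_{w\le0}[n]$, $\mathcal C_{w\ge n}=\mathcal C_{w\ge0}[n]$, $\operatorname{Hom}(\mathcal C_{w\le0},\mathcal C_{w\ge1})=0$, and every object $M$ fits, for each $n$, into an exact triangle $A\to M\to B\to A[1]$ with $A\in\mathcal C_{w\le n}$, $B\in\mathcal C_{w\ge n+1}$ (a weight filtration). Heart: $\mathcal C_{w=0}=\mathcal C_{w\le0}\cap\mathcal C_{w\ge0}$. A functor $r$ is weight exact if it maps $\mathcal C_{1,w\le0}$ into $\mathcal C_{2,w\le0}$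 and $\mathcal C_{1,w\ge0}$ into $\mathcal C_{2,w\ge0}$; $r_{w=0}$ is the induced functor on hearts. For an additive category $\mathcal A$, the radical is the ideal $\operatorname{rad}_{\mathcal A}(X,Y)=\{f:X\to Y \mid \mathrm{id}_X-gf \text{ is invertible for all } g:Y\to X\}$. A minimal weight filtration concentrated at $n$ of $M$ is an exact triangle $M_{\le n-1}\to M\to M_{\ge n}\xrightarrow{\delta}M_{\le n-1}[1]$ with $M_{\le n-1}\in\mathcal C_{w\le n-1}$, $M_{\ge n}\in\mathcal C_{w\ge n}$ and $\delta\in\operatorname{rad}_{\mathcal C}(M_{\ge n},M_{\le n-1}[1])$. *)

From HB Require Import structures.
From mathcomp Require Import all_boot all_algebra.
Set Implicit Arguments.
Unset Strict Implicit.
Unset Printing Implicit Defensive.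
Import GRing.Theory.
Local Open Scope ring_scope.

(* F is (isomorphic to) a finite direct product  prod_{i<k} K_i  of fields
   of characteristic zero: the ring morphisms F -> K_i jointly give a
   bijection F -> prod_i K_i. *)
Definition finite_prod_char0_fields (F : comPzRingType) : Prop :=
  exists (k : nat) (K : 'I_k -> fieldType)
         (pr : forall i : 'I_k, {rmorphism F -> K i}),
    (forall i, [pchar (K i)] =i pred0) /\
    (forall x y : F, (forall i, pr i x = pr i y) -> x = y) /\
    (forall v : forall i : 'I_k, K i, exists x : F, forall i, pr i x = v i).

Record LinCat (F : comPzRingType) := MkLinCat {
  ob :> Type;
  hom : ob -> ob -> lmodType F;
  comp : forall X Y Z : ob, hom Y Z -> hom X Y -> hom X Z;
  idm : forall X : ob, hom X X;
  compA : forall (X Y Z W : ob) (h : hom Z W) (g : hom Y Z) (f : hom X Y),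
      comp h (comp g f) = comp (comp h g) f;
  comp1m : forall (X Y : ob) (f : hom X Y), comp (idm Y) f = f;
  compm1 : forall (X Y : ob) (f : hom X Y), comp f (idm X) = f;
  comp_linl : forall (X Y Z : ob) (a : F) (g1 g2 : hom Y Z) (f : hom X Y),
      comp (a *: g1 + g2) f = a *: comp g1 f + comp g2 f;
  comp_linr : forall (X Y Z : ob) (a : F) (g : hom Y Z) (f1 f2 : hom X Y),
      comp g (a *: f1 + f2) = a *: comp g f1 + comp g f2
}.
Arguments comp {F C X Y Z} : rename.
Arguments idm {F C} X : rename.
Arguments hom {F} C _ _ : rename.

Section CatDefs.
Variables (F : comPzRingType) (C : LinCat F).

Definition is_iso (X Y : C) (f : hom C X Y) : Prop :=
  exists g : hom C Y X, comp g f = idm X /\ comp f g = idm Y.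

Definition isomorphic (X Y : C) : Prop := exists f : hom C X Y, is_iso f.

Definition is_zero_obj (Z : C) : Prop := idm Z = 0.

Definition is_biprod (X Y S : C) : Prop :=
  exists (i1 : hom C X S) (i2 : hom C Y S) (p1 : hom C S X) (p2 : hom C S Y),
    [/\ comp p1 i1 = idm X, comp p2 i2 = idm Y, comp p1 i2 = 0,
        comp p2 i1 = 0 & comp i1 p1 + comp i2 p2 = idm S].

Definition additive_cat : Prop :=
  (exists Z : C, is_zero_obj Z) /\ (forall X Y : C, exists S : C, is_biprod X Y S).

Definition retract (X Y : C) : Prop :=
  exists (i : hom C X Y) (p : hom C Y X), comp p i = idm X.

Definition rad (X Y : C) (f : hom C X Y) : Prop :=
  forall g : hom C Y X, is_iso (idm X - comp g f).

End CatDefs.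

Record TriCat (F : comPzRingType) := MkTriCat {
  cat :> LinCat F;
  tc_additive : additive_cat cat;
  sh : cat -> cat;
  shm : forall X Y : cat, hom cat X Y -> hom cat (sh X) (sh Y);
  shm_lin : forall (X Y : cat) (a : F) (f g : hom cat X Y),
      shm (a *: f + g) = a *: shm f + shm g;
  shm_comp : forall (X Y Z : cat) (g : hom cat Y Z) (f : hom cat X Y),
      shm (comp g f) = comp (shm g) (shm f);
  shm_id : forall X : cat, shm (idm X) = idm (sh X);
  shm_faithful : forall (X Y : cat) (f g : hom cat X Y), shm f = shm g -> f = g;
  shm_full : forall (X Y : cat) (g : hom cat (sh X) (sh Y)), exists f, shm f = g;
  sh_esurj : forall X : cat, exists Y : cat, isomorphic (sh Y) X;
  dist : forall X Y Z : cat,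
      hom cat X Y -> hom cat Y Z -> hom cat Z (sh X) -> Prop;
  tr1_iso : forall (X Y Z X' Y' Z' : cat)
      (f : hom cat X Y) (g : hom cat Y Z) (h : hom cat Z (sh X))
      (f' : hom cat X' Y') (g' : hom cat Y' Z') (h' : hom cat Z' (sh X'))
      (a : hom cat X X') (b : hom cat Y Y') (c : hom cat Z Z'),
      is_iso a -> is_iso b -> is_iso c ->
      comp b f = comp f' a -> comp c g = comp g' b ->
      comp (shm a) h = comp h' c ->
      dist f g h -> dist f' g' h';
  tr1_id : forall (X Z : cat), is_zero_obj Z ->
      dist (idm X) (0 : hom cat X Z) (0 : hom cat Z (sh X));
  tr1_ext : forall (X Y : cat) (f : hom cat X Y),
      exists (Z : cat) (g : hom cat Y Z) (h : hom cat Z (sh X)), dist f g h;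
  tr2 : forall (X Y Z : cat)
      (f : hom cat X Y) (g : hom cat Y Z) (h : hom cat Z (sh X)),
      dist f g h <-> dist g h (- shm f);
  tr3 : forall (X Y Z X' Y' Z' : cat)
      (f : hom cat X Y) (g : hom cat Y Z) (h : hom cat Z (sh X))
      (f' : hom cat X' Y') (g' : hom cat Y' Z') (h' : hom cat Z' (sh X'))
      (a : hom cat X X') (b : hom cat Y Y'),
      dist f g h -> dist f' g' h' -> comp b f = comp f' a ->
      exists c : hom cat Z Z', comp c g = comp g' b /\ comp (shm a) h = comp h' c;
  tr4 : forall (X Y Z Z' X' Y' : cat) (f : hom cat X Y) (g : hom cat Y Z)
      (u : hom cat Y Z') (h : hom cat Z' (sh X))
      (v : hom cat Z X') (k : hom cat X' (sh Y))
      (w : hom cat Z Y') (l : hom cat Y' (sh X)),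
      dist f u h -> dist g v k -> dist (comp g f) w l ->
      exists (a : hom cat Z' Y') (b : hom cat Y' X'),
        [/\ dist a b (comp (shm u) k), comp a u = comp w g, comp l a = h,
            comp b w = v & comp k b = comp (shm f) l]
}.
Arguments sh {F} t _ : rename.
Arguments shm {F t X Y} : rename.
Arguments dist {F t X Y Z} : rename.

Section WeightDefs.
Variables (F : comPzRingType) (C : TriCat F).

Definition shn (n : nat) (X : C) : C := iter n (sh C) X.

(* membership in the shifted class  P[n], n : int :
   X is isomorphic to Y[n] for some Y in P; with n = a - b this is
   expressed as X[b] ~= Y[a] (the shift being an auto-equivalence). *)
Definition shifted (P : C -> Prop) (n : int) (X : C) : Prop :=
  exists (Y : C) (a b : nat),
    [/\ P Y, n = (a%:Z - b%:Z)%R & isomorphic (shn b X) (shn a Y)].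

Record WeightStr := MkWeightStr {
  wle0 : C -> Prop;
  wge0 : C -> Prop;
  wle0_summand : forall X Y : C, retract X Y -> wle0 Y -> wle0 X;
  wge0_summand : forall X Y : C, retract X Y -> wge0 Y -> wge0 X;
  wle0_sub_shift : forall X : C, wle0 X -> shifted wle0 1 X;
  wge0_shift_sub : forall X : C, shifted wge0 1 X -> wge0 X;
  w_orth : forall X Y : C, wle0 X -> shifted wge0 1 Y ->
      forall f : hom C X Y, f = 0;
  w_filt : forall (M : C) (n : int),
      exists (A B : C) (f : hom C A M) (g : hom C M B) (h : hom C B (sh C A)),
        [/\ dist f g h, shifted wle0 n A & shifted wge0 (n + 1) B]
}.

Definition wle (w : WeightStr) (n : int) : C -> Prop := shifted (wle0 w) n.
Definition wge (w : WeightStr) (n : int) : C -> Prop := shifted (wge0 w) n.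

Definition heart (w : WeightStr) (X : C) : Prop := wle0 w X /\ wge0 w X.

Definition min_wfilt (w : WeightStr) (n : int) (M A B : C)
    (f : hom C A M) (g : hom C M B) (d : hom C B (sh C A)) : Prop :=
  [/\ dist f g d, wle w (n - 1) A, wge w n B & rad d].

End WeightDefs.

Record ExactFun (F : comPzRingType) (C1 C2 : TriCat F) := MkExactFun {
  fob :> C1 -> C2;
  fhom : forall X Y : C1, hom C1 X Y -> hom C2 (fob X) (fob Y);
  fhom_lin : forall (X Y : C1) (a : F) (f g : hom C1 X Y),
      fhom (a *: f + g) = a *: fhom f + fhom g;
  fhom_comp : forall (X Y Z : C1) (g : hom C1 Y Z) (f : hom C1 X Y),
      fhom (comp g f) = comp (fhom g) (fhom f);
  fhom_id : forall X : C1, fhom (idm X) = idm (fob X);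
  fphi : forall X : C1, hom C2 (fob (sh C1 X)) (sh C2 (fob X));
  fphi_iso : forall X : C1, is_iso (fphi X);
  fphi_nat : forall (X Y : C1) (f : hom C1 X Y),
      comp (fphi Y) (fhom (shm f)) = comp (shm (fhom f)) (fphi X);
  fdist : forall (X Y Z : C1)
      (f : hom C1 X Y) (g : hom C1 Y Z) (h : hom C1 Z (sh C1 X)),
      dist f g h -> dist (fhom f) (fhom g) (comp (fphi X) (fhom h))
}.
Arguments fhom {F C1 C2} r {X Y} : rename.
Arguments fphi {F C1 C2} r X : rename.

Definition weight_exact (F : comPzRingType) (C1 C2 : TriCat F)
    (w1 : WeightStr C1) (w2 : WeightStr C2) (r : ExactFun C1 C2) : Prop :=
  (forall X : C1, wle0 w1 X -> wle0 w2 (r X)) /\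
  (forall X : C1, wge0 w1 X -> wge0 w2 (r X)).

Definition full_on_hearts (F : comPzRingType) (C1 C2 : TriCat F)
    (w1 : WeightStr C1) (r : ExactFun C1 C2) : Prop :=
  forall X Y : C1, heart w1 X -> heart w1 Y ->
    forall g : hom C2 (r X) (r Y), exists f : hom C1 X Y, fhom r f = g.

From Pilot Require Import Defs.
From mathcomp Require Import all_boot all_algebra.
From mathcomp Require Import zify.
Import Defs GRing.Theory.
Set Implicit Arguments.
Unset Strict Implicit.
Unset Printing Implicit Defensive.
Local Open Scope ring_scope.

(* Weight exactness transports the triangle and the weight bounds, so only the
   radical condition needs work, and for it it suffices that every morphism
   r(X) -> r(Y) with X of weights <= n and Y of weights >= n lies in the image of r.
   By orthogonality such a morphism kills the weights > n of Y and the weights < n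
   of X, so it factors through a morphism r(X') -> r(Y') between objects of pure
   weight n; these are shifts of heart objects, on which r is full.  Lifting G to g
   then gives id - G r(d) = r(id - g d), an isomorphism. *)

Section LinearMap.
Variables (F : comPzRingType) (U V : lmodType F) (h : U -> V).
Hypothesis h_lin : forall a x y, h (a *: x + y) = a *: h x + h y.

Lemma lin_mapD x y : h (x + y) = h x + h y.
Proof. by have := h_lin 1 x y; rewrite !scale1r. Qed.

Lemma lin_map0 : h 0 = 0.
Proof. by apply: (addrI (h 0)); rewrite -lin_mapD !addr0. Qed.

Lemma lin_mapN x : h (- x) = - h x.
Proof. by apply/eqP; rewrite -subr_eq0 opprK -lin_mapD addNr lin_map0. Qed.

Lemma lin_mapB x y : h (x - y) = h x - h y.
Proof. by rewrite lin_mapD lin_mapN. Qed.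

End LinearMap.

Section LinCatTheory.
Variables (F : comPzRingType) (C : LinCat F).
Implicit Types X Y Z : C.

Lemma comp0m X Y Z (f : hom C X Y) : comp (0 : hom C Y Z) f = 0.
Proof. exact: (@lin_map0 _ _ _ (comp^~ f) (fun a g1 g2 => comp_linl a g1 g2 f)). Qed.

Lemma compm0 X Y Z (g : hom C Y Z) : comp g (0 : hom C X Y) = 0.
Proof. exact: (@lin_map0 _ _ _ (comp g) (fun a f1 f2 => comp_linr a g f1 f2)). Qed.

Lemma compNl X Y Z (g : hom C Y Z) (f : hom C X Y) : comp (- g) f = - comp g f.
Proof. exact: (@lin_mapN _ _ _ (comp^~ f) (fun a g1 g2 => comp_linl a g1 g2 f)). Qed.

Lemma compNr X Y Z (g : hom C Y Z) (f : hom C X Y) : comp g (- f) = - comp g f.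
Proof. exact: (@lin_mapN _ _ _ (comp g) (fun a f1 f2 => comp_linr a g f1 f2)). Qed.

Lemma iso_id X : is_iso (idm X).
Proof. by exists (idm X); rewrite comp1m. Qed.

Lemma iso_comp X Y Z (g : hom C Y Z) (f : hom C X Y) :
  is_iso f -> is_iso g -> is_iso (comp g f).
Proof.
move=> [f' [f'f ff']] [g' [g'g gg']]; exists (comp f' g'); split.
  by rewrite compA -(compA f') g'g compm1.
by rewrite compA -(compA g) ff' compm1 gg'.
Qed.

Lemma iso_cancel_l X Y Z (f : hom C Y Z) (g1 g2 : hom C X Y) :
  is_iso f -> comp f g1 = comp f g2 -> g1 = g2.
Proof. by move=> [f' [f'f _]] e; rewrite -(comp1m g1) -(comp1m g2) -f'f -!compA e. Qed.

Lemma iso_cancel_r X Y Z (f : hom C X Y) (g1 g2 : hom C Y Z) :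
  is_iso f -> comp g1 f = comp g2 f -> g1 = g2.
Proof. by move=> [f' [_ ff']] e; rewrite -(compm1 g1) -(compm1 g2) -ff' !compA e. Qed.

Lemma isomorphic_refl X : isomorphic X X.
Proof. by exists (idm X); apply: iso_id. Qed.

Lemma isomorphic_sym X Y : isomorphic X Y -> isomorphic Y X.
Proof. by move=> [f [g [gf fg]]]; exists g, f. Qed.

Lemma isomorphic_trans X Y Z : isomorphic X Y -> isomorphic Y Z -> isomorphic X Z.
Proof. by move=> [f isof] [g isog]; exists (comp g f); apply: iso_comp. Qed.

Lemma isomorphic_retract X Y : isomorphic X Y -> retract X Y.
Proof. by move=> [f [g [gf _]]]; exists f, g. Qed.

Lemma retract_trans X Y Z : retract X Y -> retract Y Z -> retract X Z.
Proof.
move=> [i [p pi]] [i' [p' p'i']]; exists (comp i' i), (comp p p').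
by rewrite compA -(compA p) p'i' compm1.
Qed.

End LinCatTheory.

Section TriCatTheory.
Variables (F : comPzRingType) (C : TriCat F).
Implicit Types X Y Z W : C.

Lemma shm0 X Y : shm (0 : hom C X Y) = 0.
Proof. exact: (@lin_map0 _ _ _ shm (@shm_lin _ C X Y)). Qed.

Lemma isomorphic_sh_iff X Y : isomorphic (sh C X) (sh C Y) <-> isomorphic X Y.
Proof.
split=> [[f [g [gf fg]]] | [f [g [gf fg]]]]; last first.
  by exists (shm f), (shm g); rewrite -!shm_comp gf fg !shm_id.
have [f0 ef] := shm_full f; have [g0 eg] := shm_full g.
by exists f0, g0; split; apply: shm_faithful; rewrite shm_comp ef eg ?gf ?fg shm_id.
Qed.

Lemma retract_sh_iff X Y : retract (sh C X) (sh C Y) <-> retract X Y.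
Proof.
split=> [[i [p pi]] | [i [p pi]]]; last first.
  by exists (shm i), (shm p); rewrite -shm_comp pi shm_id.
have [i0 ei] := shm_full i; have [p0 ep] := shm_full p.
by exists i0, p0; apply: shm_faithful; rewrite shm_comp ei ep pi shm_id.
Qed.

Fixpoint shnm k X Y (f : hom C X Y) : hom C (shn k X) (shn k Y) :=
  if k is k'.+1 then shm (shnm k' f) else f.

Lemma shnm0 k X Y : shnm k (0 : hom C X Y) = 0.
Proof. by elim: k => [|k IH] //=; rewrite IH shm0. Qed.

Lemma shnm_faithful k X Y (f g : hom C X Y) : shnm k f = shnm k g -> f = g.
Proof. by elim: k => [|k IH] //= /shm_faithful /IH. Qed.

Lemma shnm_full k X Y (g : hom C (shn k X) (shn k Y)) : exists f, shnm k f = g.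
Proof.
elim: k g => [|k IH] g; first by exists g.
have [g1 <-] := shm_full g; have [f ef] := IH g1; by exists f; rewrite /= ef.
Qed.

Lemma shnD a b X : shn (a + b) X = shn a (shn b X).
Proof. exact: iterD. Qed.

Lemma shnSr k X : shn k (sh C X) = sh C (shn k X).
Proof. by rewrite /shn -iterSr. Qed.

Lemma isomorphic_shn_iff k X Y : isomorphic (shn k X) (shn k Y) <-> isomorphic X Y.
Proof. by elim: k => [|k IH] //=; rewrite isomorphic_sh_iff. Qed.

Lemma retract_shn_iff k X Y : retract (shn k X) (shn k Y) <-> retract X Y.
Proof. by elim: k => [|k IH] //=; rewrite retract_sh_iff. Qed.

Lemma shn_esurj k X : exists Y, isomorphic (shn k Y) X.
Proof.
elim: k X => [|k IH] X; first by exists X; apply: isomorphic_refl.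
have [Z ZX] := sh_esurj X; have [Y YZ] := IH Z.
by exists Y; apply: isomorphic_trans ZX; apply/isomorphic_sh_iff.
Qed.

Lemma exists_zero_obj : exists Z0 : C, is_zero_obj Z0.
Proof. by have [[Z0 Z0_0] _] := tc_additive C; exists Z0. Qed.

Lemma dist_factor_cone X Y Z W (f : hom C X Y) (g : hom C Y Z) (h : hom C Z (sh C X))
    (u : hom C Y W) :
  dist f g h -> comp u f = 0 -> exists c : hom C Z W, comp c g = u.
Proof.
(* TR3 between the rotated triangle and the trivial triangle on W. *)
move=> T uf; have [Z0 Z0_0] := exists_zero_obj.
have /tr2/tr2/tr2 T1 := T; have /tr2/tr2 T0 := tr1_id W Z0_0.
have [c' [e _]] := tr3 T1 T0 (a := 0) (b := shm u)
  ltac:(by rewrite compNr -shm_comp uf shm0 oppr0 comp0m).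
have [c ec] := shm_full c'.
exists c; apply: shm_faithful; rewrite shm_comp ec.
by move: e; rewrite compNr compNl shm_id comp1m => /oppr_inj.
Qed.

Lemma dist_factor_fiber X Y Z W (f : hom C X Y) (g : hom C Y Z) (h : hom C Z (sh C X))
    (v : hom C W Y) :
  dist f g h -> comp g v = 0 -> exists c : hom C W X, comp f c = v.
Proof.
move=> T gv; have [Z0 Z0_0] := exists_zero_obj.
have /tr2 T1 := T; have /tr2 T0 := tr1_id W Z0_0.
have [c' [_ e]] := tr3 T0 T1 (a := v) (b := 0) ltac:(by rewrite gv comp0m).
have [c ec] := shm_full c'.
exists c; apply: shm_faithful; rewrite shm_comp ec.
by move: e; rewrite compNr compNl shm_id compm1 => /oppr_inj.
Qed.

End TriCatTheory.

Section WeightTheory.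
Variables (F : comPzRingType) (C : TriCat F) (w : WeightStr C).
Implicit Types X Y Z : C.

Lemma isomorphic_shn_rebalance (a b a' b' : nat) X Y :
  isomorphic (shn b X) (shn a Y) -> (a + b' = a' + b)%N ->
  isomorphic (shn b' X) (shn a' Y).
Proof.
move=> XY e; apply: (isomorphic_shn_iff b _ _).1.
have := (isomorphic_shn_iff b' _ _).2 XY; rewrite -!shnD.
by rewrite [(b + b')%N]addnC [(b + a')%N]addnC -e [(a + b')%N]addnC.
Qed.

Lemma shifted_at (P : C -> Prop) (n : int) X (a b : nat) :
  shifted P n X -> n = a%:Z - b%:Z ->
  exists Y, P Y /\ isomorphic (shn b X) (shn a Y).
Proof.
move=> [Y [a0 [b0 [PY -> XY]]]] e; exists Y; split=> //.
by apply: isomorphic_shn_rebalance XY _; lia.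
Qed.

Lemma shifted_retract (P : C -> Prop) :
    (forall X Y, retract X Y -> P Y -> P X) ->
  forall (n : int) X Z, retract X Z -> shifted P n Z -> shifted P n X.
Proof.
move=> P_summand n X Z XZ [Y [a [b [PY en ZY]]]].
have [X0 X0X] := shn_esurj a (shn b X).
exists X0, a, b; split=> //; last exact: isomorphic_sym.
apply: (P_summand _ Y) => //; apply/(retract_shn_iff a).
apply: retract_trans (isomorphic_retract X0X) _.
apply: retract_trans (isomorphic_retract ZY).
exact/retract_shn_iff.
Qed.

Lemma shifted_sh (P : C -> Prop) (n : int) X :
  shifted P n X -> shifted P (n + 1) (sh C X).
Proof.
move=> [Y [a [b [PY -> XY]]]]; exists Y, a.+1, b; split=> //; first lia.
by rewrite shnSr /=; apply/isomorphic_sh_iff.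
Qed.

Lemma wge0_shn k X : wge0 w X -> wge0 w (shn k X).
Proof.
elim: k => [|k IH] // /IH Xk; apply: wge0_shift_sub.
by exists (shn k X), 1%N, 0%N; split=> //; apply: isomorphic_refl.
Qed.

Lemma wle_wge_orth (m k : int) X Y (f : hom C X Y) :
  wle w m X -> wge w k Y -> m < k -> f = 0.
Proof.
move=> [X0 [a1 [b1 [X0le em XX0]]]] [Y0 [a2 [b2 [Y0ge ek YY0]]]] mk.
set c := (a1 + b2)%N; set d := (a2 + b1 - c).-1.
have [al [al' [al'al _]]] : isomorphic (shn (b1 + b2) X) (shn c X0).
  by apply: isomorphic_shn_rebalance XX0 _; rewrite /c; lia.
have [be [be' [be'be _]]] : isomorphic (shn (b1 + b2) Y) (shn c (shn d.+1 Y0)).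
  by rewrite -shnD; apply: isomorphic_shn_rebalance YY0 _; rewrite /c /d; lia.
have Y1ge : shifted (wge0 w) 1 (shn d.+1 Y0).
  by exists (shn d Y0), 1%N, 0%N; split=> //; [exact: wge0_shn | exact: isomorphic_refl].
have [f0 ef0] := shnm_full (comp be (comp (shnm (b1 + b2) f) al')).
apply: (@shnm_faithful _ _ (b1 + b2)); rewrite shnm0.
have := congr1 (fun u => comp be' (comp u al)) ef0.
rewrite (w_orth X0le Y1ge f0) shnm0 comp0m compm0 !compA be'be comp1m.
by rewrite -compA al'al compm1.
Qed.

Lemma wge_fst_of_dist (n : int) X Y Z (i : hom C X Y) (p : hom C Y Z)
    (e : hom C Z (sh C X)) :
  dist i p e -> wge w n Y -> wge w (n + 1) Z -> wge w n X.
Proof.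
move=> T Yge Zge.
have [P [Q [s [t [e' [TX Ple Qge]]]]]] := w_filt w X (n - 1).
rewrite subrK in Qge.
have is0 : comp i s = 0 by apply: (wle_wge_orth (m := n - 1) (k := n)) => //; lia.
have s0 : s = 0.
  have /tr2/tr2 T' := T.
  have [c ec] := dist_factor_fiber T' (v := shm s)
    ltac:(by rewrite compNl -shm_comp is0 shm0 oppr0).
  have c0 : c = 0.
    apply: (wle_wge_orth (m := n) (k := n + 1)) => //; last lia.
    by rewrite -(subrK 1 n); apply: shifted_sh.
  by apply: shm_faithful; rewrite -ec c0 compm0 shm0.
have [c ec] := dist_factor_cone TX (u := idm X) ltac:(by rewrite s0 compm0).
by apply: (shifted_retract (@wge0_summand _ _ w) (Z := Q)) => //; exists t, c.
Qed.

Lemma wle_thd_of_dist (n : int) X Y Z (j : hom C X Y) (q : hom C Y Z)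
    (e : hom C Z (sh C X)) :
  dist j q e -> wle w n Y -> wle w (n - 1) X -> wle w n Z.
Proof.
move=> T Yle Xle.
have [P [Q [s [t [e' [TZ Ple Qge]]]]]] := w_filt w Z n.
have tq : comp t q = 0 by apply: (wle_wge_orth (m := n) (k := n + 1)) => //; lia.
have t0 : t = 0.
  have /tr2 T' := T.
  have [c <-] := dist_factor_cone T' tq.
  have -> : c = 0.
    apply: (wle_wge_orth (m := n) (k := n + 1)) => //; last lia.
    by rewrite -(subrK 1 n); apply: shifted_sh.
  exact: comp0m.
have [c ec] := dist_factor_fiber TZ (v := idm Z) ltac:(by rewrite t0 comp0m).
by apply: (shifted_retract (@wle0_summand _ _ w) (Z := P)) => //; exists c, s.
Qed.

Lemma wle_wge_heart (n : int) X : wle w n X -> wge w n X ->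
  exists (a b : nat) (X0 : C),
    [/\ heart w X0, isomorphic (shn b X) (shn a X0) & n = a%:Z - b%:Z].
Proof.
move=> [X0 [a [b [X0le en XX0]]]] Xge.
have [X1 [X1ge XX1]] := shifted_at Xge en.
exists a, b, X0; split=> //; split=> //.
apply: (wge0_summand (Y := X1)) => //; apply: isomorphic_retract.
apply/(isomorphic_shn_iff a); exact: isomorphic_trans (isomorphic_sym XX0) XX1.
Qed.

End WeightTheory.

Section ExactFunTheory.
Variables (F : comPzRingType) (C1 C2 : TriCat F) (r : ExactFun C1 C2).
Implicit Types X Y : C1.

Lemma fhomB X Y (f g : hom C1 X Y) : fhom r (f - g) = fhom r f - fhom r g.
Proof. exact: (@lin_mapB _ _ _ (fhom r) (@fhom_lin _ _ _ r X Y)). Qed.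

Lemma fhom_iso X Y (f : hom C1 X Y) : is_iso f -> is_iso (fhom r f).
Proof. by move=> [g [gf fg]]; exists (fhom r g); rewrite -!fhom_comp gf fg !fhom_id. Qed.

Lemma isomorphic_fob X Y : isomorphic X Y -> isomorphic (r X) (r Y).
Proof. by move=> [f isof]; exists (fhom r f); apply: fhom_iso. Qed.

Lemma isomorphic_fob_shn k X : isomorphic (r (shn k X)) (shn k (r X)).
Proof.
elim: k => [|k IH] /=; first exact: isomorphic_refl.
apply: isomorphic_trans (proj2 (isomorphic_sh_iff _ _) IH).
by exists (fphi r _); apply: fphi_iso.
Qed.

Lemma shifted_fob (P1 : C1 -> Prop) (P2 : C2 -> Prop) (n : int) X :
  (forall Y, P1 Y -> P2 (r Y)) -> shifted P1 n X -> shifted P2 n (r X).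
Proof.
move=> P12 [Y [a [b [P1Y en XY]]]]; exists (r Y), a, b; split; [exact: P12 | done |].
apply: isomorphic_trans (isomorphic_sym (isomorphic_fob_shn b X)) _.
exact: isomorphic_trans (isomorphic_fob XY) (isomorphic_fob_shn a Y).
Qed.

Definition fhom_onto X Y :=
  forall G : hom C2 (r X) (r Y), exists g : hom C1 X Y, fhom r g = G.

Lemma fhom_onto_isomorphic X Y X' Y' :
  isomorphic X X' -> isomorphic Y Y' -> fhom_onto X' Y' -> fhom_onto X Y.
Proof.
move=> [al [al' [al'al _]]] [be [be' [be'be _]]] onto' G.
have [g' eg'] := onto' (comp (fhom r be) (comp G (fhom r al'))).
exists (comp be' (comp g' al)).
rewrite !fhom_comp eg' !compA -fhom_comp be'be fhom_id comp1m.
by rewrite -compA -fhom_comp al'al fhom_id compm1.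
Qed.

Lemma fhom_onto_sh_iff X Y : fhom_onto (sh C1 X) (sh C1 Y) <-> fhom_onto X Y.
Proof.
split=> onto G.
  have [psY [_ phipsY]] := fphi_iso r Y.
  have [g' eg'] := onto (comp psY (comp (shm G) (fphi r X))).
  have [g eg] := shm_full g'.
  exists g; apply: shm_faithful; apply: (iso_cancel_r (fphi_iso r X)).
  by rewrite -fphi_nat eg eg' compA phipsY comp1m.
have [psX [psXphi _]] := fphi_iso r X.
have [G' eG'] := shm_full (comp (fphi r Y) (comp G psX)).
have [g eg] := onto G'.
exists (shm g); apply: (iso_cancel_l (fphi_iso r Y)).
by rewrite fphi_nat eg eG' -!compA psXphi compm1.
Qed.

Lemma fhom_onto_shn_iff k X Y : fhom_onto (shn k X) (shn k Y) <-> fhom_onto X Y.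
Proof. by elim: k => [|k IH] //=; rewrite fhom_onto_sh_iff. Qed.

Lemma rad_fhom X Y (d : hom C1 X (sh C1 Y)) :
  fhom_onto (sh C1 Y) X -> rad d -> rad (comp (fphi r Y) (fhom r d)).
Proof.
move=> onto d_rad G; have [g eg] := onto (comp G (fphi r Y)).
rewrite compA -eg -fhom_comp -fhom_id -fhomB.
exact/fhom_iso/d_rad.
Qed.

End ExactFunTheory.

Section WeightExactFun.
Variables (F : comPzRingType) (C1 C2 : TriCat F).
Variables (w1 : WeightStr C1) (w2 : WeightStr C2) (r : ExactFun C1 C2).
Hypotheses (r_wexact : weight_exact w1 w2 r) (r_full : full_on_hearts w1 r).
Implicit Types X Y : C1.

Lemma wle_fob (n : int) X : wle w1 n X -> wle w2 n (r X).
Proof. exact: shifted_fob r_wexact.1. Qed.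

Lemma wge_fob (n : int) X : wge w1 n X -> wge w2 n (r X).
Proof. exact: shifted_fob r_wexact.2. Qed.

Lemma fhom_onto_pure (n : int) X Y :
  wle w1 n X -> wge w1 n X -> wle w1 n Y -> wge w1 n Y -> fhom_onto r X Y.
Proof.
move=> Xle Xge Yle Yge.
have [a [b [X0 [X0h XX0 en]]]] := wle_wge_heart Xle Xge.
have [a' [b' [Y0 [Y0h YY0 en']]]] := wle_wge_heart Yle Yge.
have YY0b : isomorphic (shn b Y) (shn a Y0).
  by apply: isomorphic_shn_rebalance YY0 _; lia.
apply/(fhom_onto_shn_iff r b); apply: fhom_onto_isomorphic XX0 YY0b _.
by apply/fhom_onto_shn_iff => G; apply: r_full.
Qed.

Lemma fhom_onto_wle_wge (n : int) X Y : wle w1 n X -> wge w1 n Y -> fhom_onto r X Y.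
Proof.
move=> Xle Yge G.
have [Y1 [Y2 [i [p [e [TY Y1le Y2ge]]]]]] := w_filt w1 Y n.
have Y1ge : wge w1 n Y1 := wge_fst_of_dist TY Yge Y2ge.
have [X1 [X2 [j [q [e' [TX X1le X2ge]]]]]] := w_filt w1 X (n - 1).
rewrite subrK in X2ge.
have X2le : wle w1 n X2 := wle_thd_of_dist TX Xle X1le.
have pG : comp (fhom r p) G = 0.
  by apply: (wle_wge_orth (m := n) (k := n + 1)); [exact: wle_fob | exact: wge_fob | lia].
have [G1 <-] := dist_factor_fiber (fdist r TY) pG.
have G1j : comp G1 (fhom r j) = 0.
  by apply: (wle_wge_orth (m := n - 1) (k := n)); [exact: wle_fob | exact: wge_fob | lia].
have [G2 <-] := dist_factor_cone (fdist r TX) G1j.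
have [g <-] := fhom_onto_pure X2le X2ge Y1le Y1ge G2.
by exists (comp i (comp g q)); rewrite !fhom_comp.
Qed.

End WeightExactFun.

Theorem mainTheorem2 (F : comPzRingType) (hF : finite_prod_char0_fields F)
    (C1 C2 : TriCat F) (w1 : WeightStr C1) (w2 : WeightStr C2)
    (r : ExactFun C1 C2)
    (hexact : weight_exact w1 w2 r) (hfull : full_on_hearts w1 r)
    (n : int) (M A B : C1)
    (f : hom C1 A M) (g : hom C1 M B) (d : hom C1 B (sh C1 A)) :
  min_wfilt w1 n f g d ->
  min_wfilt w2 n (fhom r f) (fhom r g) (comp (fphi r A) (fhom r d)).
Proof.
move=> [T Ale Bge d_rad]; split.
- exact: fdist.
- exact: (wle_fob hexact).
- exact: (wge_fob hexact).
apply: rad_fhom d_rad; apply: (fhom_onto_wle_wge hexact hfull (n := n)) => //.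
by rewrite -(subrK 1 n); apply: shifted_sh.
Qed.
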